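(* Let $G=(V,E)$ be a simple undirected graph with $V=[n]$, and let $k\ge 1$ be an integer. Consider the following three optimization problems. (P1) Maximize $\sum_{r\in[k]}\sum_{i\in[n]} Y^{rr}_{ii}$ over $Y\in\mathbb S^{n(k+1)}$, viewed as a $(k+1)\times(k+1)$ array of $n\times n$ blocks $Y^{rl}$ ($r,l\in[k+1]$), subject to: $Y^{rr}_{ij}=0$ for all $\{i,j\}\in E$, $r\in[k]$; $\sum_{r\in[k+1]}Y^{rr}_{ii}=1$ for all $i\in[n]$; $Y^{rl}_{ii}=0$ for all $i\in[n]$ and $r,l\in[k+1]$ with $r\ne l$; $Y\ge 0$ entrywise; and $\begin{bmatrix}1&\mathrm{diag}(Y)^{\top}\\ \mathrm{diag}(Y)&Y\end{bmatrix}\succeq 0$. (P2) Maximize $\sum_{r\in[k]}\sum_{i\in[n]} Y^{rr}_{ii}$ over $Y\in\mathbb S^{nk}$, viewed as a $k\times k$ array of $n\times n$ blocks $Y^{rl}$ ($r,l\in[k]$), subject to: $Y^{rr}_{ij}=0$ for all $\{i,j\}\in E$, $r\in[k]$; $Y^{rl}_{ii}=0$ for all $i\in[n]$, $r\neq l$; $Y\ge0$ entrywise; $\begin{bmatrix}1&\mathrm{diag}(Y)^{\top}\\ \mathrm{diag}(Y)&Y\end{bmatrix}\succeq 0$; and additionally $1-\sum_{r\in[k]}Y^{rr}_{ii}-\sum_{r\in[k]}Y^{rr}_{jj}+\sum_{r\in[k]}\sum_{l\in[k]}Y^{rl}_{ij}\ge 0$ for all $i,j\in[n]$ with $i>j$,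 and $Y^{ll}_{ii}-\sum_{r\in[k]}Y^{rl}_{ij}\ge 0$ for all $i,j\in[n]$ with $i\ne j$ and all $l\in[k]$. (R1) $\theta^1_k(G)=\max \langle I,Z\rangle$ over $Z,X\in\mathbb S^n$ subject to: $Z_{ij}=0$ for $\{i,j\}\in E$; $X_{ii}=0$ for $i\in[n]$; $Z\ge0$, $X\ge 0$ entrywise; $Z-X\succeq 0$; $\begin{bmatrix}1&\mathrm{diag}(Z)^{\top}\\ \mathrm{diag}(Z)&Z+(k-1)X\end{bmatrix}\succeq 0$; $1-Z_{ii}-Z_{jj}+Z_{ij}+(k-1)X_{ij}\ge 0$ for $i,j\in[n]$, $i>j$; and $Z_{ii}-Z_{ij}-(k-1)X_{ij}\ge 0$ for $i,j\in[n]$, $i\ne j$. Then (P1), (P2) and (R1) are equivalent (for each, any feasible solution yields a feasible solution of each of the others with the same objective value; in particular their optimal values coincide), and (R1) is strictly feasible.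
   Context: $\mathbb S^m$ is the space of real symmetric $m\times m$ matrices; $\langle A,B\rangle=\mathrm{trace}(AB)$; $\mathrm{diag}(Y)$ is the vector of diagonal entries of $Y$; $A\ge 0$ means entrywise nonnegativity and $\succeq 0$ (resp. $\succ0$) means positive semidefinite (resp. definite). Strict feasibility of (R1) means there is a feasible point of (R1) at which both matrix inequalities hold with positive definite matrices. *)

From HB Require Import structures.
From mathcomp Require Import all_boot all_order all_algebra.
From mathcomp Require Import reals.
Set Implicit Arguments. Unset Strict Implicit. Unset Printing Implicit Defensive.
Import Order.TTheory GRing.Theory Num.Theory.
Local Open Scope ring_scope.

Section Defs.
Variable R : realType.

Definition symmetric m (A : 'M[R]_m) : Prop := A^T = A.

Definition psd m (A : 'M[R]_m) : Prop :=
  symmetric A /\ forall v : 'cV[R]_m, 0 <= (v^T *m A *m v) 0 0.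
Definition pd m (A : 'M[R]_m) : Prop :=
  symmetric A /\ forall v : 'cV[R]_m, v != 0 -> 0 < (v^T *m A *m v) 0 0.

Definition nonneg m n (A : 'M[R]_(m, n)) : Prop := forall i j, 0 <= A i j.

Definition diagv m (A : 'M[R]_m) : 'cV[R]_m := \col_i A i i.

Definition bordered m (d : 'cV[R]_m) (M : 'M[R]_m) : 'M[R]_(1 + m) :=
  block_mx (1%:M : 'M[R]_1) d^T d M.

(* block (r,l), entry (i,j) of a matrix viewed as a p x p array of n x n
   blocks: row index r*n+i, column index l*n+j *)
Definition blk p n (Y : 'M[R]_(p * n)) (r l : 'I_p) (i j : 'I_n) : R :=
  Y (mxvec_index r i) (mxvec_index l j).

Definition simple_graph n (adj : rel 'I_n) : Prop :=
  (forall i j, adj i j = adj j i) /\ (forall i, ~~ adj i i).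

Definition feasible_P1 n k (adj : rel 'I_n) (Y : 'M[R]_(k.+1 * n)) : Prop :=
  symmetric Y /\
  (forall (r : 'I_k.+1) i j, (r < k)%N -> adj i j -> blk Y r r i j = 0) /\
  (forall i, \sum_(r < k.+1) blk Y r r i i = 1) /\
  (forall i (r l : 'I_k.+1), r != l -> blk Y r l i i = 0) /\
  nonneg Y /\
  psd (bordered (diagv Y) Y).

Definition obj_P1 n k (Y : 'M[R]_(k.+1 * n)) : R :=
  \sum_(r < k.+1 | (r < k)%N) \sum_(i < n) blk Y r r i i.

Definition feasible_P2 n k (adj : rel 'I_n) (Y : 'M[R]_(k * n)) : Prop :=
  symmetric Y /\
  (forall (r : 'I_k) i j, adj i j -> blk Y r r i j = 0) /\
  (forall i (r l : 'I_k), r != l -> blk Y r l i i = 0) /\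
  nonneg Y /\
  psd (bordered (diagv Y) Y) /\
  (forall i j : 'I_n, (j < i)%N ->
     0 <= 1 - \sum_(r < k) blk Y r r i i - \sum_(r < k) blk Y r r j j
          + \sum_(r < k) \sum_(l < k) blk Y r l i j) /\
  (forall (i j : 'I_n) (l : 'I_k), i != j ->
     0 <= blk Y l l i i - \sum_(r < k) blk Y r l i j).

Definition obj_P2 n k (Y : 'M[R]_(k * n)) : R :=
  \sum_(r < k) \sum_(i < n) blk Y r r i i.

Definition feasible_R1 n k (adj : rel 'I_n) (Z X : 'M[R]_n) : Prop :=
  symmetric Z /\ symmetric X /\
  (forall i j, adj i j -> Z i j = 0) /\
  (forall i, X i i = 0) /\
  nonneg Z /\ nonneg X /\
  psd (Z - X) /\
  psd (bordered (diagv Z) (Z + (k%:R - 1) *: X)) /\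
  (forall i j : 'I_n, (j < i)%N ->
     0 <= 1 - Z i i - Z j j + Z i j + (k%:R - 1) * X i j) /\
  (forall i j : 'I_n, i != j ->
     0 <= Z i i - Z i j - (k%:R - 1) * X i j).

Definition obj_R1 n (Z : 'M[R]_n) : R := \tr (1%:M *m Z).

Definition strictly_feasible_R1 n k (adj : rel 'I_n) : Prop :=
  exists Z X : 'M[R]_n,
    [/\ feasible_R1 k adj Z X, pd (Z - X) &
        pd (bordered (diagv Z) (Z + (k%:R - 1) *: X))].

End Defs.

From HB Require Import structures.
From mathcomp Require Import all_boot all_order all_algebra.
From mathcomp Require Import reals.
From mathcomp Require Import ring lra.
Set Implicit Arguments. Unset Strict Implicit. Unset Printing Implicit Defensive.
Import Order.TTheory GRing.Theory Num.Theory.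
Local Open Scope ring_scope.

(* All comparisons go through (R1).  A block matrix Y feasible for (P2), or
   for (P1) with its last block row and column dropped, gives Z = sum_r Y^rr
   and (k - 1) X = sum_(r != l) Y^rl; testing the bordered form of Y on the
   vectors (0, (e_s - e_s') (x) u) shows k Z - T >= 0 for T = Z + (k - 1) X,
   i.e. (k - 1) (Z - X) >= 0.  For (P1), the normalization
   sum_r Y^rr_ii = 1 puts (-1, e_j (x) 1) in the kernel of the bordered
   matrix, so the last block row and column are affine in the other blocks
   and their nonnegativity is the summed form of the extra inequalities of
   (P2).  Conversely (Z, X) is spread evenly, Y^rl = (r = l ? Z : X) / k, and
   averaging the k block components of a test vector bounds the bordered form
   of Y below by that of Z + (k - 1) X; appending the same affine last block
   row gives a (P1) point, whose bordered form is that of Y after a linear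
   change of variables.  Z = I / (n + 2), X = 0 is strictly feasible. *)

Lemma big_ord_recr_lift (R : nmodType) k (F : 'I_k.+1 -> R) :
  \sum_r F r = \sum_(r < k) F (lift ord_max r) + F ord_max.
Proof.
rewrite big_ord_recr /=; congr (_ + _); apply: eq_bigr => r _; congr F.
by apply: val_inj; rewrite /= /bump leqNgt ltn_ord.
Qed.

Section QuadraticForms.
Variables (R : realFieldType) (m : nat).
Implicit Types (M N : 'I_m -> 'I_m -> R) (f g h : 'I_m -> R).

Definition bform M f g : R := \sum_i \sum_j f i * M i j * g j.
Definition qform M f : R := bform M f f.

Lemma sumr_delta_r (F : 'I_m -> R) a : \sum_b F b * (b == a)%:R = F a.
Proof.
rewrite (bigD1 a) //= eqxx mulr1 big1 ?addr0 // => b /negbTE ->; exact: mulr0.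
Qed.

Lemma sumr_delta_l (F : 'I_m -> R) a : \sum_b (b == a)%:R * F b = F a.
Proof. by rewrite -[RHS](sumr_delta_r F a); apply: eq_bigr => b _; rewrite mulrC. Qed.

Lemma sumr_delta2 (F : 'I_m -> 'I_m -> R) a b :
  \sum_r \sum_l (r == a)%:R * (l == b)%:R * F r l = F a b.
Proof.
rewrite -(sumr_delta_l (F^~ b) a); apply: eq_bigr => r _.
by rewrite -(sumr_delta_l (F r) b) mulr_sumr; apply: eq_bigr => l _; rewrite mulrA.
Qed.

Lemma eq_bform M f f' g g' : f =1 f' -> g =1 g' -> bform M f g = bform M f' g'.
Proof. by move=> ef eg; apply: eq_bigr => i _; apply: eq_bigr => j _; rewrite ef eg. Qed.

Lemma eq_bform_mx M N f g :
  (forall i j, M i j = N i j) -> bform M f g = bform N f g.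
Proof. by move=> eM; apply: eq_bigr => i _; apply: eq_bigr => j _; rewrite eM. Qed.

Lemma bform_combl M a b f g h :
  bform M (fun i => a * f i + b * g i) h = a * bform M f h + b * bform M g h.
Proof.
rewrite /bform !mulr_sumr -big_split; apply: eq_bigr => i _.
rewrite !mulr_sumr -big_split; apply: eq_bigr => j _ /=; ring.
Qed.

Lemma bformC M f g : (forall i j, M i j = M j i) -> bform M f g = bform M g f.
Proof.
move=> sM; rewrite /bform exchange_big; apply: eq_bigr => i _; apply: eq_bigr => j _.
rewrite sM; ring.
Qed.

Lemma bform_combr M a b f g h :
  bform M h (fun i => a * f i + b * g i) = a * bform M h f + b * bform M h g.
Proof.
rewrite /bform !mulr_sumr -big_split; apply: eq_bigr => i _.
rewrite !mulr_sumr -big_split; apply: eq_bigr => j _ /=; ring.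
Qed.

Lemma bform_combM M N a b f g :
  bform (fun i j => a * M i j + b * N i j) f g = a * bform M f g + b * bform N f g.
Proof.
rewrite /bform !mulr_sumr -big_split; apply: eq_bigr => i _.
rewrite !mulr_sumr -big_split; apply: eq_bigr => j _ /=; ring.
Qed.

Lemma qform_combM M N a b f :
  qform (fun i j => a * M i j + b * N i j) f = a * qform M f + b * qform N f.
Proof. exact: bform_combM. Qed.

Lemma qform_comb M a b f g : (forall i j, M i j = M j i) ->
  qform M (fun i => a * f i + b * g i) =
  a ^+ 2 * qform M f + 2 * a * b * bform M f g + b ^+ 2 * qform M g.
Proof.
by move=> sM; rewrite /qform bform_combl !bform_combr (bformC g f sM); ring.
Qed.

Lemma bform_suml (I : finType) M (F : I -> 'I_m -> R) h :
  bform M (fun i => \sum_r F r i) h = \sum_r bform M (F r) h.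
Proof.
rewrite /bform; under eq_bigr do under eq_bigr do rewrite !big_distrl.
under eq_bigr do rewrite exchange_big.
by rewrite exchange_big.
Qed.

Lemma bformZl M c f g : bform M (fun i => c * f i) g = c * bform M f g.
Proof.
rewrite /bform mulr_sumr; apply: eq_bigr => i _; rewrite mulr_sumr.
by apply: eq_bigr => j _; rewrite !mulrA.
Qed.

Lemma bform_sumr (I : finType) M f (F : I -> 'I_m -> R) :
  bform M f (fun j => \sum_r F r j) = \sum_r bform M f (F r).
Proof.
rewrite /bform; symmetry; rewrite exchange_big /=; apply: eq_bigr => i _.
rewrite exchange_big /=; apply: eq_bigr => j _.
by rewrite mulr_sumr.
Qed.

Lemma qformZ M c f : qform M (fun i => c * f i) = c ^+ 2 * qform M f.
Proof.
rewrite /qform /bform mulr_sumr; apply: eq_bigr => i _; rewrite mulr_sumr.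
by apply: eq_bigr => j _; ring.
Qed.

Lemma bform_deltal M a f : bform M (fun b => (b == a)%:R) f = \sum_b M a b * f b.
Proof.
rewrite /bform -(sumr_delta_l (fun i => \sum_j M i j * f j) a).
by apply: eq_bigr => i _; rewrite mulr_sumr; apply: eq_bigr => j _; rewrite mulrA.
Qed.

Lemma qform_delta M a : qform M (fun b => (b == a)%:R) = M a a.
Proof. by rewrite /qform bform_deltal sumr_delta_r. Qed.

Lemma linear_quadratic_ge0_eq0 (a c : R) :
  0 <= a -> (forall s, 0 <= 2 * s * c + s ^+ 2 * a) -> c = 0.
Proof.
move=> a0 H; have a1 : 0 < a + 1 by rewrite ltr_wpDl.
have := H (- c / (a + 1)).
have -> : 2 * (- c / (a + 1)) * c + (- c / (a + 1)) ^+ 2 * a =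
          - (c ^+ 2 * (a + 2)) / (a + 1) ^+ 2.
  by field; rewrite gt_eqF.
rewrite pmulr_lge0 ?invr_gt0 ?exprn_gt0 // oppr_ge0 pmulr_lle0 ?ltr_wpDl //.
by move=> c2; apply/eqP; rewrite -sqrf_eq0 eq_le c2 sqr_ge0.
Qed.

Lemma psd_qform_kernel M f : (forall i j, M i j = M j i) ->
  (forall g, 0 <= qform M g) -> qform M f = 0 -> forall a, \sum_b M a b * f b = 0.
Proof.
move=> sM psdM f0 a; rewrite -bform_deltal.
apply: (linear_quadratic_ge0_eq0 (a := M a a)).
  by rewrite -qform_delta.
move=> s; have := psdM (fun i => 1 * f i + s * (i == a)%:R).
by rewrite qform_comb // f0 qform_delta bformC //; lra.
Qed.

Lemma qform_mean_le k M (G : 'I_k -> 'I_m -> R) : (0 < k)%N ->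
  (forall i j, M i j = M j i) -> (forall g, 0 <= qform M g) ->
  k%:R * qform M (fun i => (\sum_r G r i) / k%:R) <= \sum_r qform M (G r).
Proof.
move=> k0 sM psdM; set u := fun i => _.
have kn0 : k%:R != 0 :> R by rewrite pnatr_eq0 -lt0n.
have sumG : \sum_r bform M (G r) u = k%:R * qform M u.
  rewrite -bform_suml /qform -bformZl; apply: eq_bform => // i.
  by rewrite /u mulrC mulfVK.
have : 0 <= \sum_r qform M (fun i => 1 * G r i + (-1) * u i).
  by apply: sumr_ge0 => r _; apply: psdM.
under eq_bigr do rewrite qform_comb //.
rewrite !big_split /= -!mulr_sumr sumG sumr_const card_ord -mulr_natl; lra.
Qed.
End QuadraticForms.

Section Semidefinite.
Variable R : realType.

Lemma symmetricE m (A : 'M[R]_m) : symmetric A -> forall i j, A i j = A j i.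
Proof. by move=> sA i j; rewrite -{1}sA mxE. Qed.

Lemma quad_mx_qform m (A : 'M[R]_m) (v : 'cV[R]_m) :
  (v^T *m A *m v) 0 0 = qform A (fun i => v i 0).
Proof.
rewrite /qform /bform mxE exchange_big /=; apply: eq_bigr => j _.
by rewrite mxE big_distrl /=; apply: eq_bigr => i _; rewrite !mxE.
Qed.

Lemma psd_qformP m (A : 'M[R]_m) :
  psd A <-> symmetric A /\ forall f, 0 <= qform A f.
Proof.
split=> [[sA psdA]|[sA psdA]]; last by split=> // v; rewrite quad_mx_qform.
split=> // f; have := psdA (\col_i f i); rewrite quad_mx_qform.
by rewrite /qform (eq_bform _ (f' := f) (g' := f)) // => i; rewrite mxE.
Qed.

Lemma pd_qform m (A : 'M[R]_m) : symmetric A ->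
  (forall f, (exists i, f i != 0) -> 0 < qform A f) -> pd A.
Proof.
move=> sA pdA; split=> // v nz; rewrite quad_mx_qform; apply: pdA.
apply/existsP; apply: contraNT nz; rewrite negb_exists => /forallP v0.
by apply/eqP/matrixP => i j; rewrite ord1 mxE; apply/eqP/negbNE/v0.
Qed.

Lemma symmetric_comb m (A B : 'M[R]_m) a b : symmetric A -> symmetric B ->
  symmetric (a *: A + b *: B).
Proof. by move=> sA sB; rewrite /symmetric linearD !linearZ /= sA sB. Qed.

Definition bordered_qform m (d : 'cV[R]_m) (A : 'I_m -> 'I_m -> R) t u :=
  t * t + 2 * t * (\sum_i d i 0 * u i) + qform A u.

Lemma qform_bordered m (d : 'cV[R]_m) (A : 'M[R]_m) f :
  qform (bordered d A) f =
  bordered_qform d A (f (lshift m ord0)) (fun i => f (rshift 1 i)).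
Proof.
rewrite /qform /bform /bordered big_split_ord /= big_ord1 !big_split_ord /= !big_ord1.
rewrite block_mxEul mxE eqxx mulr1n.
under eq_bigr do rewrite block_mxEur mxE.
under [X in _ + X = _]eq_bigr => i _.
  rewrite big_split_ord big_ord1 /= block_mxEdl.
  under eq_bigr do rewrite block_mxEdr.
  over.
rewrite big_split /= mulr1 /bordered_qform /qform /bform -!addrA; congr (_ + _).
rewrite addrA; congr (_ + _).
rewrite -big_split /= mulr_sumr -mulr_sumr mulr_sumr; apply: eq_bigr => i _.
ring.
Qed.

Lemma symmetric_bordered m (d : 'cV[R]_m) (A : 'M[R]_m) :
  symmetric A -> symmetric (bordered d A).
Proof. by move=> sA; rewrite /symmetric /bordered tr_block_mx tr_scalar_mx trmxK sA. Qed.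

Lemma qform_bordered_col_mx m (d : 'cV[R]_m) (A : 'M[R]_m) t u :
  qform (bordered d A) (fun a => col_mx (\col_(_ < 1) t) (\col_j u j) a 0) =
  bordered_qform d A t u.
Proof.
rewrite qform_bordered /bordered_qform col_mxEu mxE.
under eq_bigr do rewrite col_mxEd mxE.
by rewrite /qform (eq_bform _ (f' := u) (g' := u)) // => i; rewrite col_mxEd mxE.
Qed.

Lemma psd_bordered_qform_ge0 m (d : 'cV[R]_m) (A : 'M[R]_m) t u :
  psd (bordered d A) -> 0 <= bordered_qform d A t u.
Proof. by move=> /psd_qformP[_ psdB]; rewrite -qform_bordered_col_mx. Qed.

Lemma psd_borderedP m (d : 'cV[R]_m) (A : 'M[R]_m) : symmetric A ->
  psd (bordered d A) <-> forall t u, 0 <= bordered_qform d A t u.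
Proof.
move=> sA; split=> [psdB t u|psdB]; first exact: psd_bordered_qform_ge0.
apply/psd_qformP; split=> [|f]; first exact: symmetric_bordered.
by rewrite qform_bordered.
Qed.

Lemma psd_bordered_sqr_le m (d : 'cV[R]_m) (A : 'M[R]_m) i :
  psd (bordered d A) -> d i 0 ^+ 2 <= A i i.
Proof.
move=> /(psd_bordered_qform_ge0 (- d i 0) (fun j => (j == i)%:R)).
by rewrite /bordered_qform sumr_delta_r qform_delta; nra.
Qed.

Lemma psd_bordered_kernel m (d : 'cV[R]_m) (A : 'M[R]_m) t u :
  psd (bordered d A) -> bordered_qform d A t u = 0 ->
  forall i, d i 0 * t + \sum_j A i j * u j = 0.
Proof.
move=> /psd_qformP[sB psdB] q0 i; rewrite -qform_bordered_col_mx in q0.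
have := psd_qform_kernel (symmetricE sB) psdB q0 (rshift 1 i).
rewrite big_split_ord big_ord1 /= /bordered block_mxEdl col_mxEu !mxE.
by under eq_bigr do rewrite block_mxEdr col_mxEd mxE.
Qed.

Lemma pd_psd m (A : 'M[R]_m) : pd A -> psd A.
Proof.
move=> [sA pdA]; split=> // v; have [->|v0] := eqVneq v 0; last exact/ltW/pdA.
by rewrite mulmx0 mxE.
Qed.

End Semidefinite.

Section Blocks.
Variables (R : realType) (p n : nat).
Implicit Types (Y : 'M[R]_(p * n)) (F : 'I_p -> 'I_p -> 'I_n -> 'I_n -> R).

Definition blk_index (a : 'I_(p * n)) : 'I_p * 'I_n :=
  enum_val (cast_ord (esym (mxvec_cast p n)) a).

Lemma blk_index_mxvec r i : blk_index (mxvec_index r i) = (r, i).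
Proof. by rewrite /blk_index /mxvec_index cast_ordK enum_rankK. Qed.

Lemma sum_mxvec_index (G : 'I_(p * n) -> R) :
  \sum_a G a = \sum_r \sum_i G (mxvec_index r i).
Proof.
rewrite (reindex _ (curry_mxvec_bij _ _)) /= pair_bigA /=.
by apply: eq_bigr => -[r i].
Qed.

Definition blkmx F : 'M[R]_(p * n) :=
  \matrix_(a, b) F (blk_index a).1 (blk_index b).1 (blk_index a).2 (blk_index b).2.

Lemma blk_blkmx F r l i j : blk (blkmx F) r l i j = F r l i j.
Proof. by rewrite /blk /blkmx mxE !blk_index_mxvec. Qed.

Lemma symmetric_blkmx F :
  (forall r l i j, F r l i j = F l r j i) -> symmetric (blkmx F).
Proof. by move=> sF; apply/matrixP => a b; rewrite !mxE. Qed.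

Lemma nonneg_blkmx F : (forall r l i j, 0 <= F r l i j) -> nonneg (blkmx F).
Proof. by move=> F0 a b; rewrite mxE. Qed.

Lemma blkC Y r l i j : symmetric Y -> blk Y r l i j = blk Y l r j i.
Proof. by move=> sY; rewrite /blk -{1}sY mxE. Qed.

Lemma sum_blk_diag Y i :
  (forall i (r l : 'I_p), r != l -> blk Y r l i i = 0) ->
  \sum_r \sum_l blk Y r l i i = \sum_r blk Y r r i i.
Proof.
move=> od; apply: eq_bigr => r _; rewrite (bigD1 r) //= big1 ?addr0 // => l lr.
by apply: od; rewrite eq_sym.
Qed.

(* Entries of the last block column and of the corner block of a (P1) point,
   in terms of its other blocks. *)
Definition row_slack Y r i j := blk Y r r i i - \sum_l blk Y r l i j.

Definition pair_slack Y i j :=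
  1 - \sum_r blk Y r r i i - \sum_r blk Y r r j j + \sum_r \sum_l blk Y r l i j.

Definition blk_bordered_qform Y t (H : 'I_p -> 'I_n -> R) :=
  t * t + 2 * t * (\sum_r \sum_i blk Y r r i i * H r i)
  + \sum_r \sum_l \sum_i \sum_j H r i * blk Y r l i j * H l j.

Lemma eq_blk_bordered_qform Y t H H' :
  (forall r i, H r i = H' r i) -> blk_bordered_qform Y t H = blk_bordered_qform Y t H'.
Proof.
move=> eH; rewrite /blk_bordered_qform; congr (_ + _ * _ + _).
  by apply: eq_bigr => r _; apply: eq_bigr => i _; rewrite eH.
by do 4! (apply: eq_bigr => ? _); rewrite !eH.
Qed.

Lemma bordered_qform_blk Y t g :
  bordered_qform (diagv Y) Y t g =
  blk_bordered_qform Y t (fun r i => g (mxvec_index r i)).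
Proof.
rewrite /bordered_qform /blk_bordered_qform sum_mxvec_index; congr (_ + _ * _ + _).
  by apply: eq_bigr => r _; apply: eq_bigr => i _; rewrite mxE.
rewrite /qform /bform sum_mxvec_index; apply: eq_bigr => r _.
under eq_bigr do rewrite sum_mxvec_index.
by rewrite exchange_big /=; apply: eq_bigr => l _; rewrite exchange_big.
Qed.

Lemma psd_bordered_blkP Y : symmetric Y ->
  psd (bordered (diagv Y) Y) <-> forall t H, 0 <= blk_bordered_qform Y t H.
Proof.
move=> sY; rewrite psd_borderedP //; split=> [psdB t H|psdB t g].
  have := psdB t (fun a => H (blk_index a).1 (blk_index a).2).
  by rewrite bordered_qform_blk (eq_blk_bordered_qform _ _ (H' := H)) // => r i;
    rewrite blk_index_mxvec.
by rewrite bordered_qform_blk.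
Qed.

Lemma blk_bordered_qform_delta Y t j :
  blk_bordered_qform Y t (fun _ i => (i == j)%:R) =
  t * t + 2 * t * (\sum_r blk Y r r j j) + \sum_r \sum_l blk Y r l j j.
Proof.
rewrite /blk_bordered_qform; congr (_ + _ * _ + _).
  by apply: eq_bigr => r _; rewrite sumr_delta_r.
apply: eq_bigr => r _; apply: eq_bigr => l _.
exact: (qform_delta (fun i j => blk Y r l i j)).
Qed.

Lemma blk_row_sum Y j : symmetric Y -> psd (bordered (diagv Y) Y) ->
  (forall i, \sum_r blk Y r r i i = 1) ->
  (forall i (r l : 'I_p), r != l -> blk Y r l i i = 0) ->
  forall l i, \sum_r blk Y l r i j = blk Y l l i i.
Proof.
move=> sY psdY d1 od l i.
pose u a : R := ((blk_index a).2 == j)%:R.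
have u0 : bordered_qform (diagv Y) Y (-1) u = 0.
  rewrite bordered_qform_blk (eq_blk_bordered_qform _ _ (H' := fun _ i => (i == j)%:R)).
    by rewrite blk_bordered_qform_delta sum_blk_diag // d1; ring.
  by move=> r i'; rewrite /u blk_index_mxvec.
have /eqP := psd_bordered_kernel psdY u0 (mxvec_index l i).
rewrite mxE mulrN1 addrC subr_eq0 => /eqP e; rewrite {2}/blk -e sum_mxvec_index.
apply: eq_bigr => r _; rewrite -[LHS](sumr_delta_r _ j).
by apply: eq_bigr => i' _; rewrite /u blk_index_mxvec.
Qed.

Lemma blk_bordered_qform_tensor Y a u :
  blk_bordered_qform Y 0 (fun r i => a r * u i) =
  \sum_r \sum_l a r * a l * qform (fun i j => blk Y r l i j) u.
Proof.
rewrite /blk_bordered_qform !(mulr0, mul0r, add0r).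
apply: eq_bigr => r _; apply: eq_bigr => l _.
rewrite /qform /bform mulr_sumr; apply: eq_bigr => i _; rewrite mulr_sumr.
by apply: eq_bigr => j _ /=; ring.
Qed.

Lemma sum_blk_qform_le Y u : symmetric Y -> psd (bordered (diagv Y) Y) ->
  \sum_r \sum_l qform (fun i j => blk Y r l i j) u <=
  p%:R * \sum_r qform (fun i j => blk Y r r i j) u.
Proof.
move=> sY /(psd_bordered_blkP sY) psdY.
set q := fun r l => qform (fun i j => blk Y r l i j) u.
have pair s s' : 0 <= q s s - q s s' - q s' s + q s' s'.
  suff -> : q s s - q s s' - q s' s + q s' s' =
    blk_bordered_qform Y 0 (fun r i => ((r == s)%:R - (r == s')%:R) * u i) by [].
  rewrite blk_bordered_qform_tensor -(sumr_delta2 q s s) -(sumr_delta2 q s s').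
  rewrite -(sumr_delta2 q s' s) -(sumr_delta2 q s' s') -!sumrB -!big_split.
  apply: eq_bigr => r _; rewrite -!sumrB -!big_split.
  by apply: eq_bigr => l _ /=; rewrite /q; ring.
have : 0 <= \sum_s \sum_s' (q s s - q s s' - q s' s + q s' s').
  by apply: sumr_ge0 => s _; apply: sumr_ge0 => s' _; apply: pair.
under eq_bigr do rewrite !big_split /= !sumrN sumr_const card_ord -mulr_natl.
rewrite !big_split /= !sumrN -mulr_sumr sumr_const card_ord -mulr_natl.
rewrite [\sum_s \sum_s' q s' s]exchange_big /=; lra.
Qed.

Lemma blk_qform_ge0 Y r u : psd (bordered (diagv Y) Y) -> symmetric Y ->
  0 <= qform (fun i j => blk Y r r i j) u.
Proof.
move=> psdY sY; have := (psd_bordered_blkP sY).1 psdY 0 (fun s i => (s == r)%:R * u i).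
by rewrite blk_bordered_qform_tensor sumr_delta2.
Qed.

End Blocks.

Section WeakP2.
Variables (R : realType) (k n : nat) (adj : rel 'I_n).
Hypothesis k_gt0 : (0 < k)%N.
Implicit Type Y : 'M[R]_(k * n).

Definition weak_P2 Y : Prop :=
  symmetric Y /\ (forall r i j, adj i j -> blk Y r r i j = 0) /\
  (forall i (r l : 'I_k), r != l -> blk Y r l i i = 0) /\ nonneg Y /\
  psd (bordered (diagv Y) Y) /\
  (forall i j : 'I_n, (j < i)%N -> 0 <= pair_slack Y i j) /\
  (forall i j : 'I_n, i != j -> 0 <= \sum_l row_slack Y l i j).

Lemma P2_weak_P2 Y : feasible_P2 adj Y -> weak_P2 Y.
Proof.
move=> [sY [hadj [od [nY [psdY [c1 c2]]]]]]; do 6! split => //.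
move=> i j ij; rewrite /row_slack sumrB exchange_big /= -sumrB.
by apply: sumr_ge0 => l _; apply: c2.
Qed.

Definition Z_of_blk Y : 'M[R]_n := \matrix_(i, j) \sum_r blk Y r r i j.
Definition T_of_blk Y i j := \sum_r \sum_l blk Y r l i j.
(* For k = 1 the inverse is the junk value 0^-1 = 0, so X = 0, consistently with
   T = Z. *)
Definition X_of_blk Y : 'M[R]_n :=
  \matrix_(i, j) ((k%:R - 1)^-1 * (T_of_blk Y i j - Z_of_blk Y i j)).

Lemma T_sub_Z_of_blk Y i j :
  T_of_blk Y i j - Z_of_blk Y i j = \sum_r \sum_(l | l != r) blk Y r l i j.
Proof.
rewrite /T_of_blk mxE -sumrB; apply: eq_bigr => r _.
by rewrite (bigD1 r) //= addrC addrK.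
Qed.

Lemma Z_add_X_of_blk Y i j :
  Z_of_blk Y i j + (k%:R - 1) * X_of_blk Y i j = T_of_blk Y i j.
Proof.
rewrite [X_of_blk _ _ _]mxE mulrA; have [k1|k1] := eqVneq (k%:R - 1 : R) 0; last first.
  by rewrite mulfV // mul1r addrC subrK.
rewrite k1 !mul0r addr0.
have {}k1 : k = 1%N by apply/eqP; rewrite -(eqr_nat R) -subr_eq0 k1.
apply/eqP; rewrite eq_sym -subr_eq0 T_sub_Z_of_blk.
apply/eqP/big1 => r _; rewrite big_pred0 // => l.
have lt1 (s : 'I_k) : (val s < 1)%N by rewrite -[X in (_ < X)%N]k1 ltn_ord.
apply/negbTE/negPn/eqP/val_inj.
by move: (lt1 l) (lt1 r); rewrite !ltnS !leqn0 => /eqP-> /eqP->.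
Qed.

Lemma symmetric_Z_of_blk Y : symmetric Y -> symmetric (Z_of_blk Y).
Proof.
by move=> sY; apply/matrixP => i j; rewrite !mxE; apply: eq_bigr => r _; apply: blkC.
Qed.

Lemma T_of_blkC Y i j : symmetric Y -> T_of_blk Y i j = T_of_blk Y j i.
Proof.
move=> sY; rewrite /T_of_blk exchange_big; apply: eq_bigr => r _; apply: eq_bigr => l _.
exact: blkC.
Qed.

Lemma symmetric_X_of_blk Y : symmetric Y -> symmetric (X_of_blk Y).
Proof.
move=> sY; apply/matrixP => i j; rewrite !mxE T_of_blkC //.
by congr (_ * (_ - _)); apply: eq_bigr => r _; apply: blkC.
Qed.

Lemma qform_Z_of_blk Y u :
  qform (Z_of_blk Y) u = \sum_r qform (fun i j => blk Y r r i j) u.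
Proof.
rewrite /qform /bform.
under eq_bigr do under eq_bigr do rewrite mxE mulr_sumr big_distrl.
by under eq_bigr do rewrite exchange_big; rewrite exchange_big.
Qed.

Lemma qform_T_of_blk Y u :
  qform (T_of_blk Y) u = \sum_r \sum_l qform (fun i j => blk Y r l i j) u.
Proof.
rewrite /qform /bform /T_of_blk.
under eq_bigr do under eq_bigr do rewrite mulr_sumr big_distrl /=.
under eq_bigr do under eq_bigr do under eq_bigr do rewrite mulr_sumr big_distrl /=.
under eq_bigr do rewrite exchange_big /=.
under eq_bigr do under eq_bigr do rewrite exchange_big /=.
rewrite exchange_big /=; apply: eq_bigr => r _; exact: exchange_big.
Qed.

Lemma psd_Z_sub_X_of_blk Y : symmetric Y -> psd (bordered (diagv Y) Y) ->
  psd (Z_of_blk Y - X_of_blk Y).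
Proof.
move=> sY psdY; apply/psd_qformP; split.
  have := symmetric_comb 1 (-1) (symmetric_Z_of_blk sY) (symmetric_X_of_blk sY).
  by rewrite scale1r scaleN1r.
move=> u; set c : R := k%:R - 1; set w := c^-1.
have w0 : 0 <= w by rewrite invr_ge0 subr_ge0 ler1n.
have wc1 : w * c <= 1 by have [->|c0] := eqVneq c 0; rewrite ?mulr0 ?mulVf.
have qZ0 : 0 <= qform (Z_of_blk Y) u.
  by rewrite qform_Z_of_blk; apply: sumr_ge0 => r _; apply: blk_qform_ge0.
have := sum_blk_qform_le u sY psdY; rewrite -qform_T_of_blk -qform_Z_of_blk => qT.
have kc : k%:R = c + 1 by rewrite /c subrK.
rewrite kc in qT.
have -> : qform (Z_of_blk Y - X_of_blk Y) u =
          (1 + w) * qform (Z_of_blk Y) u + (- w) * qform (T_of_blk Y) u.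
  by rewrite -qform_combM /qform; apply: eq_bform_mx => i j; rewrite !mxE -/w; ring.
nra.
Qed.

Lemma psd_bordered_Z_add_X_of_blk Y : symmetric Y -> psd (bordered (diagv Y) Y) ->
  psd (bordered (diagv (Z_of_blk Y)) (Z_of_blk Y + (k%:R - 1) *: X_of_blk Y)).
Proof.
move=> sY psdY.
have := symmetric_comb 1 (k%:R - 1) (symmetric_Z_of_blk sY) (symmetric_X_of_blk sY).
rewrite scale1r => sZX; apply/(psd_borderedP _ sZX) => t u.
have := (psd_bordered_blkP sY).1 psdY t (fun _ i => u i).
rewrite /bordered_qform /blk_bordered_qform; congr (_ <= _ + _ * _ + _).
  rewrite exchange_big /=; apply: eq_bigr => i _; by rewrite !mxE big_distrl.
rewrite /qform (eq_bform_mx _ _ (N := T_of_blk Y)) -/(qform _ _) ?qform_T_of_blk //.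
by move=> i j; rewrite -Z_add_X_of_blk !mxE.
Qed.

Lemma weak_P2_R1 Y : weak_P2 Y ->
  exists Z X : 'M[R]_n, feasible_R1 k adj Z X /\ obj_R1 Z = obj_P2 Y.
Proof.
move=> [sY [hadj [od [nY [psdY [c1 c2]]]]]]; exists (Z_of_blk Y), (X_of_blk Y).
have Zii i : Z_of_blk Y i i = \sum_r blk Y r r i i by rewrite mxE.
split; last first.
  rewrite /obj_R1 /obj_P2 mul1mx /mxtrace exchange_big /=.
  by apply: eq_bigr => i _; rewrite mxE.
split; first exact: symmetric_Z_of_blk.
split; first exact: symmetric_X_of_blk.
split; first by move=> i j ij; rewrite mxE big1 // => r _; apply: hadj.
split; first by move=> i; rewrite mxE T_sub_Z_of_blk big1 ?mulr0 // => r _;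
  rewrite big1 // => l; rewrite eq_sym; apply: od.
split; first by move=> i j; rewrite mxE; apply: sumr_ge0 => r _; apply: nY.
split.
  move=> i j; rewrite mxE T_sub_Z_of_blk; apply: mulr_ge0.
    by rewrite invr_ge0 subr_ge0 ler1n.
  by apply: sumr_ge0 => r _; apply: sumr_ge0 => l _; apply: nY.
split; first exact: psd_Z_sub_X_of_blk.
split; first exact: psd_bordered_Z_add_X_of_blk.
split; first by move=> i j ji; rewrite !Zii -addrA Z_add_X_of_blk; apply: c1.
move=> i j ij; rewrite Zii -addrA -opprD Z_add_X_of_blk.
by have := c2 i j ij; rewrite /row_slack sumrB.
Qed.

End WeakP2.

Section LastBlock.
Variables (R : realType) (k n : nat).
Implicit Type Y : 'M[R]_(k.+1 * n).
Local Notation m := (@ord_max k).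

Definition drop_last_blk Y : 'M[R]_(k * n) :=
  blkmx (fun r l i j => blk Y (lift m r) (lift m l) i j).

Lemma obj_P1_drop_last Y : obj_P1 Y = obj_P2 (drop_last_blk Y).
Proof.
rewrite /obj_P1 /obj_P2 big_mkcond big_ord_recr_lift ltnn addr0.
apply: eq_bigr => r _; rewrite lift_max ltn_ord.
by apply: eq_bigr => i _; rewrite blk_blkmx.
Qed.

Definition extend0 (H : 'I_k -> 'I_n -> R) (r : 'I_k.+1) i : R :=
  if unlift m r is Some r' then H r' i else 0.

Lemma extend0_lift H r i : extend0 H (lift m r) i = H r i.
Proof. by rewrite /extend0 liftK. Qed.

Lemma extend0_max H i : extend0 H m i = 0.
Proof. by rewrite /extend0 unlift_none. Qed.

Lemma blk_bordered_qform_drop_last Y t H :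
  blk_bordered_qform (drop_last_blk Y) t H = blk_bordered_qform Y t (extend0 H).
Proof.
rewrite /blk_bordered_qform; congr (_ + _ * _ + _).
  rewrite big_ord_recr_lift [X in _ = _ + X]big1 ?addr0; last first.
    by move=> i _; rewrite extend0_max mulr0.
  by apply: eq_bigr => r _; apply: eq_bigr => i _; rewrite blk_blkmx extend0_lift.
rewrite big_ord_recr_lift [X in _ = _ + X]big1 ?addr0; last first.
  by move=> l _; apply: big1 => i _; apply: big1 => j _; rewrite extend0_max !mul0r.
apply: eq_bigr => r _; rewrite big_ord_recr_lift [X in _ = _ + X]big1 ?addr0; last first.
  by move=> i _; apply: big1 => j _; rewrite extend0_max !mulr0.
apply: eq_bigr => l _; apply: eq_bigr => i _; apply: eq_bigr => j _.
by rewrite blk_blkmx !extend0_lift.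
Qed.

Section KernelRelations.
Variable Y : 'M[R]_(k.+1 * n).
Hypotheses (sY : symmetric Y) (psdY : psd (bordered (diagv Y) Y)).
Hypothesis diag1 : forall i, \sum_r blk Y r r i i = 1.
Hypothesis offdiag0 : forall i (r l : 'I_k.+1), r != l -> blk Y r l i i = 0.

Lemma row_slack_drop_last r i j :
  row_slack (drop_last_blk Y) r i j = blk Y (lift m r) m i j.
Proof.
rewrite /row_slack blk_blkmx.
under eq_bigr do rewrite blk_blkmx.
rewrite -(blk_row_sum j sY psdY diag1 offdiag0 (lift m r) i) big_ord_recr_lift.
by rewrite addrAC subrr add0r.
Qed.

Lemma pair_slack_drop_last i j : pair_slack (drop_last_blk Y) i j = blk Y m m i j.
Proof.
have rowK l i' j' := blk_row_sum j' sY psdY diag1 offdiag0 l i'.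
have -> : pair_slack (drop_last_blk Y) i j =
    1 - \sum_(r < k) blk Y (lift m r) (lift m r) i i
      - \sum_(r < k) blk Y (lift m r) (lift m r) j j
      + \sum_(r < k) \sum_(l < k) blk Y (lift m r) (lift m l) i j.
  by rewrite /pair_slack; congr (_ - _ - _ + _); do ?[apply: eq_bigr => ? _];
    rewrite blk_blkmx.
have := diag1 i; rewrite big_ord_recr_lift => diag1i.
have := rowK m i j; rewrite big_ord_recr_lift => rowm.
have colm : \sum_(r < k) blk Y m (lift m r) i j =
    \sum_(r < k) blk Y (lift m r) (lift m r) j j
    - \sum_(r < k) \sum_(l < k) blk Y (lift m r) (lift m l) i j.
  rewrite [X in _ - X]exchange_big -sumrB; apply: eq_bigr => r _ /=.
  have -> : \sum_(l < k) blk Y (lift m l) (lift m r) i j =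
            \sum_(l < k) blk Y (lift m r) (lift m l) j i.
    by apply: eq_bigr => l _; apply: blkC.
  by rewrite blkC // -(rowK (lift m r) j i) big_ord_recr_lift addrAC subrr add0r.
lra.
Qed.

End KernelRelations.

Lemma symmetric_drop_last Y : symmetric Y -> symmetric (drop_last_blk Y).
Proof. by move=> sY; apply: symmetric_blkmx => r l i j; apply: blkC. Qed.

Lemma P1_weak_P2 adj Y : feasible_P1 adj Y -> weak_P2 adj (drop_last_blk Y).
Proof.
move=> [sY [hadj [d1 [od [nY psdY]]]]].
split; first exact: symmetric_drop_last.
split; first by move=> r i j ij; rewrite blk_blkmx; apply: hadj; rewrite // lift_max.
split; first by move=> i r l rl; rewrite blk_blkmx od // (inj_eq lift_inj).
split; first by apply: nonneg_blkmx => r l i j; apply: nY.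
split.
  apply/(psd_bordered_blkP (symmetric_drop_last sY)) => t H.
  by rewrite blk_bordered_qform_drop_last; apply: (psd_bordered_blkP sY).1.
split; first by move=> i j _; rewrite pair_slack_drop_last //; apply: nY.
by move=> i j _; apply: sumr_ge0 => l _; rewrite row_slack_drop_last //; apply: nY.
Qed.

End LastBlock.

Section BlocksOfR1.
Variables (R : realType) (k n : nat).
Hypothesis k_gt0 : (0 < k)%N.
Variables Z X : 'M[R]_n.
Hypotheses (sZ : symmetric Z) (sX : symmetric X).

Definition blk_of_R1 : 'M[R]_(k * n) :=
  blkmx (fun r l i j => (if r == l then Z i j else X i j) / k%:R).

Let kn0 : k%:R != 0 :> R. Proof. by rewrite pnatr_eq0 -lt0n. Qed.

Lemma sum_blk_of_R1_diag x y : \sum_r blk blk_of_R1 r r x y = Z x y.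
Proof.
under eq_bigr do rewrite blk_blkmx eqxx.
by rewrite sumr_const card_ord -[_ *+ k]mulr_natr divfK.
Qed.

Lemma sum_blk_of_R1_row r x y :
  \sum_l blk blk_of_R1 r l x y = (Z x y + (k%:R - 1) * X x y) / k%:R.
Proof.
under eq_bigr do rewrite blk_blkmx.
rewrite -mulr_suml (bigD1 r) //= eqxx; congr ((_ + _) / _).
rewrite (eq_bigr (fun _ => X x y)); last by move=> l /negbTE; rewrite eq_sym => ->.
have km1 : k.-1%:R = k%:R - 1 :> R by rewrite -[in RHS](prednK k_gt0) mulrSr addrK.
by rewrite sumr_const cardC1 card_ord -[X x y *+ _]mulr_natl km1.
Qed.

Lemma sum_blk_of_R1 x y :
  \sum_r \sum_l blk blk_of_R1 r l x y = Z x y + (k%:R - 1) * X x y.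
Proof.
under eq_bigr do rewrite sum_blk_of_R1_row.
by rewrite sumr_const card_ord -[_ *+ k]mulr_natr divfK.
Qed.

Lemma symmetric_blk_of_R1 : symmetric blk_of_R1.
Proof.
apply: symmetric_blkmx => r l i j; rewrite eq_sym (symmetricE sZ) (symmetricE sX).
by case: (l == r).
Qed.

Lemma row_slack_blk_of_R1 r i j :
  row_slack blk_of_R1 r i j = (Z i i - Z i j - (k%:R - 1) * X i j) / k%:R.
Proof.
by rewrite /row_slack sum_blk_of_R1_row blk_blkmx eqxx -mulrBl opprD addrA.
Qed.

Lemma pair_slack_blk_of_R1 i j :
  pair_slack blk_of_R1 i j = 1 - Z i i - Z j j + Z i j + (k%:R - 1) * X i j.
Proof. by rewrite /pair_slack !sum_blk_of_R1_diag sum_blk_of_R1 addrA. Qed.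

Lemma blk_bordered_qform_of_R1 t G :
  let u i := (\sum_r G r i) / k%:R in
  blk_bordered_qform blk_of_R1 t G =
  t * t + 2 * t * (\sum_i Z i i * u i)
  + k%:R^-1 * \sum_r qform (Z - X) (G r) + k%:R * qform X u.
Proof.
move=> u; rewrite /blk_bordered_qform -[RHS]addrA; congr (_ + _ * _ + _).
  rewrite exchange_big /=; apply: eq_bigr => i _.
  rewrite /u mulr_suml mulr_sumr; apply: eq_bigr => r _.
  by rewrite blk_blkmx eqxx; ring.
have blk_bform r l : \sum_i \sum_j G r i * blk blk_of_R1 r l i j * G l j =
    (r == l)%:R / k%:R * bform (Z - X) (G r) (G l) + k%:R^-1 * bform X (G r) (G l).
  rewrite -bform_combM; apply: eq_bigr => i _; apply: eq_bigr => j _.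
  by rewrite blk_blkmx !mxE; case: eqP => _ /=; ring.
under eq_bigr do under eq_bigr do rewrite blk_bform.
under eq_bigr do rewrite big_split /=.
rewrite big_split /=; congr (_ + _).
  rewrite mulr_sumr; apply: eq_bigr => r _.
  rewrite (bigD1 r) //= eqxx mul1r big1 ?addr0 // => l /negbTE.
  by rewrite eq_sym => ->; rewrite !mul0r.
under eq_bigr do rewrite -mulr_sumr -bform_sumr.
rewrite -mulr_sumr -bform_suml.
rewrite (eq_bform _ (f' := fun i => k%:R * u i) (g' := fun i => k%:R * u i)).
  by rewrite -/(qform _ _) qformZ mulrA expr2 mulKf.
all: by move=> i; rewrite /u mulrC divfK.
Qed.

Lemma psd_bordered_blk_of_R1 :
  psd (Z - X) -> psd (bordered (diagv Z) (Z + (k%:R - 1) *: X)) ->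
  psd (bordered (diagv blk_of_R1) blk_of_R1).
Proof.
move=> /psd_qformP[sD psdD] psdB; apply/(psd_bordered_blkP symmetric_blk_of_R1) => t G.
rewrite blk_bordered_qform_of_R1 /=; set u := fun i => (\sum_r G r i) / k%:R.
have := psd_bordered_qform_ge0 t u psdB; rewrite /bordered_qform.
have -> : \sum_i diagv Z i 0 * u i = \sum_i Z i i * u i.
  by apply: eq_bigr => i _; rewrite mxE.
have -> : qform (Z + (k%:R - 1) *: X) u = qform (Z - X) u + k%:R * qform X u.
  rewrite -[qform (Z - X) u]mul1r -qform_combM /qform.
  by apply: eq_bform_mx => i j; rewrite !mxE; ring.
have := qform_mean_le G k_gt0 (symmetricE sD) psdD.
rewrite -/u -ler_pdivlMl ?ltr0n //; lra.
Qed.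

End BlocksOfR1.

Section AddLastBlock.
Variables (R : realType) (k n : nat).
Variable Y : 'M[R]_(k * n).
Hypothesis sY : symmetric Y.
Hypothesis offdiag0 : forall i (r l : 'I_k), r != l -> blk Y r l i i = 0.
Local Notation m := (@ord_max k).

Definition add_last_entry (r l : 'I_k.+1) (i j : 'I_n) : R :=
  match unlift m r, unlift m l with
  | Some r', Some l' => blk Y r' l' i j
  | Some r', None => row_slack Y r' i j
  | None, Some l' => row_slack Y l' j i
  | None, None => pair_slack Y i j
  end.

Definition add_last_blk : 'M[R]_(k.+1 * n) := blkmx add_last_entry.

Lemma blk_add_last r l i j :
  blk add_last_blk (lift m r) (lift m l) i j = blk Y r l i j.
Proof. by rewrite blk_blkmx /add_last_entry !liftK. Qed.

Lemma blk_add_last_col r i j : blk add_last_blk (lift m r) m i j = row_slack Y r i j.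
Proof. by rewrite blk_blkmx /add_last_entry liftK unlift_none. Qed.

Lemma blk_add_last_row l i j : blk add_last_blk m (lift m l) i j = row_slack Y l j i.
Proof. by rewrite blk_blkmx /add_last_entry liftK unlift_none. Qed.

Lemma blk_add_last_corner i j : blk add_last_blk m m i j = pair_slack Y i j.
Proof. by rewrite blk_blkmx /add_last_entry unlift_none. Qed.

Lemma drop_last_add_last : drop_last_blk add_last_blk = Y.
Proof.
apply/matrixP => a b; case/mxvec_indexP: a => r i; case/mxvec_indexP: b => l j.
by rewrite -[LHS]/(blk _ r l i j) blk_blkmx blk_add_last.
Qed.

Lemma row_slack_diag r i : row_slack Y r i i = 0.
Proof.
rewrite /row_slack (bigD1 r) //= big1 ?addr0 ?subrr // => l lr.
by apply: offdiag0; rewrite eq_sym.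
Qed.

Lemma symmetric_add_last : symmetric add_last_blk.
Proof.
apply: symmetric_blkmx => r l i j; rewrite /add_last_entry.
case: unliftP => [r'|] _; case: unliftP => [l'|] _ //; first exact: blkC.
rewrite /pair_slack; congr (_ + _); first by rewrite addrAC.
by rewrite exchange_big; apply: eq_bigr => a _; apply: eq_bigr => b _; apply: blkC.
Qed.

Section AddLastForm.
Variables (t : R) (H : 'I_k.+1 -> 'I_n -> R).
Let g r i := H (lift m r) i.
Let h i := H m i.
Let hsum := \sum_i h i.
Let D i := \sum_r blk Y r r i i.
Let lin_g := \sum_r \sum_i blk Y r r i i * g r i.
Let lin_h := \sum_i D i * h i.
Let quad_gg := \sum_r \sum_l \sum_i \sum_j g r i * blk Y r l i j * g l j.
Let quad_gh := \sum_r \sum_l \sum_i \sum_j g r i * blk Y r l i j * h j.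
Let quad_hh := \sum_r \sum_l \sum_i \sum_j h i * blk Y r l i j * h j.

Lemma bform_row_slack :
  \sum_r \sum_i \sum_j g r i * row_slack Y r i j * h j = lin_g * hsum - quad_gh.
Proof.
rewrite /lin_g /quad_gh /hsum big_distrl /= -sumrB; apply: eq_bigr => r _.
under eq_bigr do under eq_bigr do rewrite /row_slack mulrBr mulrBl.
under eq_bigr do rewrite sumrB.
rewrite sumrB big_distrl /=; congr (_ - _).
  by apply: eq_bigr => i _; rewrite mulr_sumr; apply: eq_bigr => j _ /=; ring.
symmetry; rewrite exchange_big /=; apply: eq_bigr => i _.
rewrite exchange_big /=; apply: eq_bigr => j _.
by rewrite mulr_sumr big_distrl; apply: eq_bigr => l _.
Qed.

Lemma bform_row_slackC :
  \sum_l \sum_i \sum_j h i * row_slack Y l j i * g l j = lin_g * hsum - quad_gh.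
Proof.
rewrite -bform_row_slack; apply: eq_bigr => l _; rewrite exchange_big /=.
by apply: eq_bigr => j _; apply: eq_bigr => i _; ring.
Qed.

Lemma qform_pair_slack :
  \sum_i \sum_j h i * pair_slack Y i j * h j = hsum * hsum - 2 * lin_h * hsum + quad_hh.
Proof.
have -> : quad_hh = qform (T_of_blk Y) h by rewrite qform_T_of_blk.
rewrite /qform /bform.
have e i j : h i * pair_slack Y i j * h j =
    h i * h j - D i * h i * h j - h i * (D j * h j) + h i * T_of_blk Y i j * h j.
  by rewrite /pair_slack /D /T_of_blk; ring.
under eq_bigr do under eq_bigr do rewrite e.
under eq_bigr do rewrite big_split /= !sumrB.
rewrite big_split /= !sumrB.
have -> : \sum_i \sum_j h i * h j = hsum * hsum.
  by rewrite /hsum big_distrl /=; apply: eq_bigr => i _; rewrite mulr_sumr.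
have -> : \sum_i \sum_j D i * h i * h j = lin_h * hsum.
  by rewrite /hsum /lin_h big_distrl /=; apply: eq_bigr => i _; rewrite mulr_sumr.
have -> : \sum_i \sum_j h i * (D j * h j) = hsum * lin_h.
  by rewrite /hsum /lin_h big_distrl /=; apply: eq_bigr => i _; rewrite mulr_sumr.
ring.
Qed.

Lemma add_last_linear_term :
  \sum_r \sum_i blk add_last_blk r r i i * H r i = lin_g + (hsum - lin_h).
Proof.
rewrite big_ord_recr_lift; congr (_ + _).
  by apply: eq_bigr => r _; apply: eq_bigr => i _; rewrite blk_add_last.
rewrite /hsum /lin_h -sumrB; apply: eq_bigr => i _.
by rewrite blk_add_last_corner /pair_slack sum_blk_diag // /h /D; ring.
Qed.

Lemma add_last_quadratic_term :
  \sum_r \sum_l \sum_i \sum_j H r i * blk add_last_blk r l i j * H l j =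
  quad_gg + (lin_g * hsum - quad_gh) + (lin_g * hsum - quad_gh)
  + (hsum * hsum - 2 * lin_h * hsum + quad_hh).
Proof.
rewrite big_ord_recr_lift -{1}bform_row_slack -bform_row_slackC -qform_pair_slack.
rewrite -!addrA addrA; congr (_ + _).
  rewrite /quad_gg -big_split /=; apply: eq_bigr => r _.
  rewrite big_ord_recr_lift; congr (_ + _).
    apply: eq_bigr => l _; apply: eq_bigr => i _; apply: eq_bigr => j _.
    by rewrite blk_add_last.
  by apply: eq_bigr => i _; apply: eq_bigr => j _; rewrite blk_add_last_col.
rewrite big_ord_recr_lift; congr (_ + _).
  apply: eq_bigr => l _; apply: eq_bigr => i _; apply: eq_bigr => j _.
  by rewrite blk_add_last_row.
by apply: eq_bigr => i _; apply: eq_bigr => j _; rewrite blk_add_last_corner.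
Qed.

Lemma shifted_linear_term :
  \sum_r \sum_i blk Y r r i i * (g r i - h i) = lin_g - lin_h.
Proof.
have <- : \sum_r \sum_i blk Y r r i i * h i = lin_h.
  by rewrite exchange_big /=; apply: eq_bigr => i _; rewrite /D big_distrl.
rewrite /lin_g -sumrB; apply: eq_bigr => r _; rewrite -sumrB.
by apply: eq_bigr => i _; rewrite mulrBr.
Qed.

Lemma shifted_quadratic_term :
  \sum_r \sum_l \sum_i \sum_j (g r i - h i) * blk Y r l i j * (g l j - h j) =
  quad_gg - quad_gh - quad_gh + quad_hh.
Proof.
have quad_hg : \sum_r \sum_l \sum_i \sum_j h i * blk Y r l i j * g l j = quad_gh.
  rewrite /quad_gh exchange_big /=; apply: eq_bigr => l _; apply: eq_bigr => r _.
  rewrite exchange_big /=; apply: eq_bigr => j _; apply: eq_bigr => i _.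
  by rewrite blkC //; ring.
rewrite -{2}quad_hg /quad_gg /quad_gh /quad_hh -!sumrB -!big_split /=.
apply: eq_bigr => r _.
rewrite -!sumrB -!big_split /=; apply: eq_bigr => l _.
rewrite -!sumrB -!big_split /=; apply: eq_bigr => i _.
by rewrite -!sumrB -!big_split /=; apply: eq_bigr => j _; ring.
Qed.

(* The added block row is designed so that the bordered form of the lifted
   matrix is that of [Y] after the substitution
   (t, H) |-> (t + sum_i H_m i, H_r - H_m). *)
Lemma blk_bordered_qform_add_last :
  blk_bordered_qform add_last_blk t H =
  blk_bordered_qform Y (t + hsum) (fun r i => g r i - h i).
Proof.
rewrite /blk_bordered_qform add_last_linear_term add_last_quadratic_term.
by rewrite shifted_linear_term shifted_quadratic_term; ring.
Qed.

End AddLastForm.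

Lemma add_last_P1 (adj : rel 'I_n) :
  (forall r i j, adj i j -> blk Y r r i j = 0) -> nonneg Y ->
  psd (bordered (diagv Y) Y) ->
  (forall r i j, 0 <= row_slack Y r i j) -> (forall i j, 0 <= pair_slack Y i j) ->
  feasible_P1 adj add_last_blk /\ obj_P1 add_last_blk = obj_P2 Y.
Proof.
move=> hadj nY psdY row0 pair0.
split; last by rewrite obj_P1_drop_last drop_last_add_last.
split; first exact: symmetric_add_last.
split.
  move=> r i j; case: (unliftP m r) => [r'|] -> rk ij; first by rewrite blk_add_last hadj.
  by rewrite ltnn in rk.
split.
  move=> i; rewrite big_ord_recr_lift blk_add_last_corner /pair_slack sum_blk_diag //.
  by under eq_bigr do rewrite blk_add_last; ring.
split.
  move=> i r l; rewrite blk_blkmx /add_last_entry.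
  case: unliftP => [r'|] ->; case: unliftP => [l'|] -> rl; rewrite ?row_slack_diag //.
    by apply: offdiag0; apply: contra rl => /eqP ->.
  by rewrite eqxx in rl.
split.
  apply: nonneg_blkmx => r l i j; rewrite /add_last_entry.
  case: unliftP => [r'|] _; case: unliftP => [l'|] _;
    [exact: nY | exact: row0 | exact: row0 | exact: pair0].
apply/(psd_bordered_blkP symmetric_add_last) => t H.
by rewrite blk_bordered_qform_add_last; apply: (psd_bordered_blkP sY).1.
Qed.

End AddLastBlock.

Section FromR1.
Variables (R : realType) (k n : nat) (adj : rel 'I_n).
Hypothesis k_gt0 : (0 < k)%N.
Variables Z X : 'M[R]_n.
Hypothesis feasZX : feasible_R1 k adj Z X.

Lemma R1_P2 : feasible_P2 adj (blk_of_R1 k Z X) /\ obj_P2 (blk_of_R1 k Z X) = obj_R1 Z.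
Proof.
have [sZ [sX [hadj [X0 [nZ [nX [psdD [psdB [c1 c2]]]]]]]]] := feasZX.
split; last first.
  rewrite /obj_P2 /obj_R1 mul1mx /mxtrace exchange_big /=.
  by apply: eq_bigr => i _; rewrite sum_blk_of_R1_diag.
split; first exact: symmetric_blk_of_R1.
split; first by move=> r i j ij; rewrite blk_blkmx eqxx hadj // mul0r.
split; first by move=> i r l rl; rewrite blk_blkmx (negbTE rl) X0 mul0r.
split.
  apply: nonneg_blkmx => r l i j; apply: divr_ge0; last exact: ler0n.
  by case: eqP.
split; first exact: psd_bordered_blk_of_R1.
split.
  by move=> i j ji; rewrite -/(pair_slack _ i j) pair_slack_blk_of_R1 //; apply: c1.
move=> i j l ij.
rewrite (eq_bigr (fun r => blk (blk_of_R1 k Z X) l r i j)); last first.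
  by move=> r _; rewrite !blk_blkmx eq_sym.
rewrite -/(row_slack _ l i j) row_slack_blk_of_R1 //.
exact: divr_ge0 (c2 i j ij) (ler0n _ _).
Qed.

Lemma R1_diag_le1 i : Z i i <= 1.
Proof.
have [_ [_ [_ [X0 [nZ [_ [_ [psdB _]]]]]]]] := feasZX.
have := psd_bordered_sqr_le i psdB; rewrite !mxE X0 mulr0 addr0.
by have := nZ i i; nra.
Qed.

Lemma R1_P1 : feasible_P1 adj (add_last_blk (blk_of_R1 k Z X)) /\
  obj_P1 (add_last_blk (blk_of_R1 k Z X)) = obj_R1 Z.
Proof.
have [sZ [sX [_ [X0 [_ [_ [_ [_ [c1 c2]]]]]]]]] := feasZX.
have [[sY [hadj [od [nY [psdY _]]]]] <-] := R1_P2.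
apply: add_last_P1 => // [r i j|i j].
  rewrite row_slack_blk_of_R1 //; apply: divr_ge0 (ler0n _ _).
  have [->|ij] := eqVneq i j; last exact: c2.
  by rewrite X0 mulr0 subrr subr0.
rewrite pair_slack_blk_of_R1 //; case: (ltngtP i j) => [ij|ji|/val_inj ->].
- by rewrite (symmetricE sZ) (symmetricE sX); have := c1 j i ij; lra.
- exact: c1.
- by rewrite X0 mulr0 addr0; have := R1_diag_le1 j; lra.
Qed.

Lemma R1_P1_P2 :
  (exists Y : 'M[R]_(k.+1 * n), feasible_P1 adj Y /\ obj_P1 Y = obj_R1 Z) /\
  (exists Y : 'M[R]_(k * n), feasible_P2 adj Y /\ obj_P2 Y = obj_R1 Z).
Proof.
split; first by exists (add_last_blk (blk_of_R1 k Z X)); exact: R1_P1.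
by exists (blk_of_R1 k Z X); exact: R1_P2.
Qed.

End FromR1.

Section StrictFeasibility.
Variables (R : realType) (n : nat).
Let c : R := n.+2%:R^-1.
Let c_gt0 : 0 < c. Proof. by rewrite invr_gt0 ltr0n. Qed.

Lemma qform_scalar_mx f : qform (c%:M : 'M[R]_n) f = c * \sum_i f i ^+ 2.
Proof.
rewrite /qform /bform mulr_sumr; apply: eq_bigr => i _.
rewrite (bigD1 i) //= big1 ?addr0 => [|j ji]; first by rewrite !mxE eqxx mulr1n; ring.
by rewrite mxE eq_sym (negbTE ji) mulr0n mulr0 mul0r.
Qed.

Lemma sum_sqr_gt0 (f : 'I_n -> R) a : f a != 0 -> 0 < \sum_i f i ^+ 2.
Proof.
move=> fa; rewrite (bigD1 a) //= ltr_pwDl ?sumr_ge0 // => [|i _].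
  by rewrite lt_def sqrf_eq0 fa sqr_ge0.
exact: sqr_ge0.
Qed.

Lemma bordered_qform_scalar_mx t u :
  bordered_qform (diagv (c%:M : 'M[R]_n)) c%:M t u =
  2 * c * t ^+ 2 + c * \sum_i (u i + t) ^+ 2.
Proof.
rewrite /bordered_qform qform_scalar_mx.
have -> : \sum_i diagv (c%:M : 'M[R]_n) i 0 * u i = c * \sum_i u i.
  by rewrite mulr_sumr; apply: eq_bigr => i _; rewrite !mxE eqxx mulr1n.
have -> : \sum_i (u i + t) ^+ 2 = \sum_i u i ^+ 2 + 2 * t * \sum_i u i + n%:R * t ^+ 2.
  have -> : n%:R * t ^+ 2 = \sum_(i < n) t ^+ 2 by rewrite sumr_const card_ord mulr_natl.
  by rewrite mulr_sumr -!big_split /=; apply: eq_bigr => i _; ring.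
rewrite /c -[n.+2]addn2 natrD; field.
by rewrite -natrD addn2 pnatr_eq0.
Qed.

Lemma pd_scalar_mx : pd (c%:M : 'M[R]_n).
Proof.
apply: pd_qform => [|f [a fa]]; first by rewrite /symmetric tr_scalar_mx.
by rewrite qform_scalar_mx mulr_gt0 // (sum_sqr_gt0 fa).
Qed.

Lemma pd_bordered_scalar_mx : pd (bordered (diagv (c%:M : 'M[R]_n)) c%:M).
Proof.
apply: pd_qform => [|f [a fa]].
  by apply: symmetric_bordered; rewrite /symmetric tr_scalar_mx.
rewrite qform_bordered bordered_qform_scalar_mx; set t := f _.
have [t0|t0] := eqVneq t 0; last first.
  have : 0 < t ^+ 2 by rewrite lt_def sqrf_eq0 t0 sqr_ge0.
  have : 0 <= \sum_i (f (rshift 1 i) + t) ^+ 2 by apply: sumr_ge0 => i _; apply: sqr_ge0.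
  by have := c_gt0; nra.
move: fa; case: (split_ordP a) => [i ->|i ->]; first by rewrite ord1 -/t t0 eqxx.
move=> fi; rewrite t0 expr0n /= mulr0 add0r mulr_gt0 //.
by apply: (sum_sqr_gt0 (a := i)); rewrite addr0.
Qed.

Lemma R1_strictly_feasible k adj : simple_graph adj -> (0 < k)%N ->
  @strictly_feasible_R1 R n k adj.
Proof.
move=> [_ irr] k_gt0; have c2 : 2 * c <= 1.
  by rewrite /c ler_pdivrMr ?ltr0n // mul1r ler_nat.
exists c%:M, 0; rewrite subr0 scaler0 addr0.
split; [|exact: pd_scalar_mx | exact: pd_bordered_scalar_mx].
split; first by rewrite /symmetric tr_scalar_mx.
split; first by rewrite /symmetric trmx0.
split.
  by move=> i j ij; rewrite mxE; case: eqP ij => // ->; rewrite (negbTE (irr j)).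
split; first by move=> i; rewrite mxE.
split; first by move=> i j; rewrite mxE mulrn_wge0 // ltW.
split; first by move=> i j; rewrite mxE.
split; first by rewrite subr0; apply/pd_psd/pd_scalar_mx.
split; first by rewrite scaler0 addr0; apply/pd_psd/pd_bordered_scalar_mx.
split=> i j => [ji|ij]; last by rewrite !mxE eqxx (negbTE ij) mulr0 !subr0 mulr1n ltW.
have ij : i != j by apply: contraTneq ji => ->; rewrite ltnn.
by rewrite !mxE !eqxx (negbTE ij) mulr0 addr0 !mulr1n mulr0n addr0; lra.
Qed.

End StrictFeasibility.

Theorem theorem3 (R : realType) (n k : nat) (adj : rel 'I_n) :
  simple_graph adj -> (1 <= k)%N ->
  [/\ (* P1 -> P2, P1 -> R1 *)
      (forall Y : 'M[R]_(k.+1 * n), feasible_P1 adj Y ->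
         (exists Y' : 'M[R]_(k * n), feasible_P2 adj Y' /\ obj_P2 Y' = obj_P1 Y) /\
         (exists Z X : 'M[R]_n, feasible_R1 k adj Z X /\ obj_R1 Z = obj_P1 Y)),
      (* P2 -> P1, P2 -> R1 *)
      (forall Y : 'M[R]_(k * n), feasible_P2 adj Y ->
         (exists Y' : 'M[R]_(k.+1 * n), feasible_P1 adj Y' /\ obj_P1 Y' = obj_P2 Y) /\
         (exists Z X : 'M[R]_n, feasible_R1 k adj Z X /\ obj_R1 Z = obj_P2 Y)),
      (* R1 -> P1, R1 -> P2 *)
      (forall Z X : 'M[R]_n, feasible_R1 k adj Z X ->
         (exists Y : 'M[R]_(k.+1 * n), feasible_P1 adj Y /\ obj_P1 Y = obj_R1 Z) /\
         (exists Y : 'M[R]_(k * n), feasible_P2 adj Y /\ obj_P2 Y = obj_R1 Z)) &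
      (* (R1) is strictly feasible *)
      @strictly_feasible_R1 R n k adj].
Proof.
move=> simple k_gt0; split.
- move=> Y /P1_weak_P2 /(weak_P2_R1 k_gt0) [Z [X [feasZX objZ]]].
  rewrite obj_P1_drop_last -objZ; split; last by exists Z, X.
  by case: (R1_P1_P2 k_gt0 feasZX).
- move=> Y /P2_weak_P2 /(weak_P2_R1 k_gt0) [Z [X [feasZX <-]]].
  by split; [case: (R1_P1_P2 k_gt0 feasZX) | exists Z, X].
- by move=> Z X /(R1_P1_P2 k_gt0).
- exact: R1_strictly_feasible simple k_gt0.
Qed.
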